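(* Let $n\in\mathbb{N}$. If a finite set $X\subseteq\mathbb{N}$ is $\omega^{36n}$-large and exp-sparse, then it is $\mathrm{EM}$-$\omega^n$-large: for every colouring $P:[X]^2\to2$ there exists an $\omega^n$-large $Y\subseteq X$ such that $P$ is transitive on $[Y]^2$.
   Context: Ordinals below $\omega^\omega$ are in Cantor normal form; $\omega^j\cdot m$ = sum of $m$ copies of $\omega^j$. For $m\in\mathbb{N}$: $0[m]=0$, $(\beta+1)[m]=\beta$, $(\beta+\omega^{n})[m]=\beta+\omega^{n-1}\cdot m$ for $n\ge1$. A finite $X=\{x_0<\dots<x_{\ell-1}\}\subseteq\mathbb{N}$ is $\alpha$-large if $\alpha[x_0]\cdots[x_{\ell-1}]=0$. A set $X$ with $\min X\ge3$ is exp-sparse if $x<y$ in $X$ implies $4^x<y$. Pairs in $[Y]^2$ are ordered pairs $(x,y)$ with $x<y$; $P$ is transitive on $[Y]^2$ if both $\{(x,y):P(x,y)=0\}$ and $\{(x,y):P(x,y)=1\}$ restricted to $Y$ are transitive relations, i.e. for $x<y<z$ in $Y$, $P(x,y)=P(y,z)$ implies $P(x,z)=P(x,y)$. *)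

From mathcomp Require Import all_boot.
Set Implicit Arguments. Unset Strict Implicit. Unset Printing Implicit Defensive.

(* Ordinals below omega^omega in Cantor normal form:
   omega^{e_1} + ... + omega^{e_k} with e_1 >= ... >= e_k, represented as the
   (non-increasing) list of exponents [:: e_1; ...; e_k].  0 is [::]. *)
Definition ord := seq nat.

Definition cnf (a : ord) : bool := sorted geq a.

Definition omega_pow_mul (j m : nat) : ord := nseq m j.
Definition omega_pow (j : nat) : ord := [:: j].

(* Fundamental sequence a[m]:
   0[m] = 0, (b+1)[m] = b, (b + omega^(n+1))[m] = b + omega^n * m. *)
Definition fund (a : ord) (m : nat) : ord :=
  match rev a with
  | [::] => [::]
  | e :: rb =>
      match e with
      | 0 => rev rb
      | n.+1 => rev rb ++ omega_pow_mul n m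
      end
  end.

(* Finite subsets of nat are represented as strictly increasing lists. *)
Definition fin_set (X : seq nat) : bool := sorted ltn X.

Definition large (a : ord) (X : seq nat) : bool := foldl fund a X == [::].

Definition exp_sparse (X : seq nat) : Prop :=
  (forall x, x \in X -> 3 <= x) /\
  (forall x y, x \in X -> y \in X -> x < y -> 4 ^ x < y).

Definition transitive_on (P : nat -> nat -> bool) (Y : seq nat) : Prop :=
  forall x y z, x \in Y -> y \in Y -> z \in Y -> x < y -> y < z ->
    P x y = P y z -> P x z = P x y.

(* Largeness survives colourings: if [X] is large for the natural sum of [a]
   and [b], a 2-colouring of [X] has an [a]-large red part or a [b]-large blue
   part; hence an [omega^c * 2^L]-large set has an [omega^c]-large colour class
   for any colouring by [L] bits.  By induction on [k], an exp-sparse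
   [omega^(3k)]-large [Z] contains an exactly [omega^k]-large transitive [Y]:
   [Z] starts with [y < e] followed by [e] exactly [omega^(3k+1)]-large blocks.
   A block starts with some [d > 4^q] for every earlier point [q], so [2^L <= d]
   where [L] counts the earlier points and the later blocks; the pigeonhole
   principle on [2^L] of its sub-blocks gives an [omega^(3k)]-large set on which
   the colours towards all earlier points and towards the heads of the (already
   chosen) later blocks are constant, and the induction hypothesis applies to
   it.  Among the [e >= 2^y] resulting blocks, [y] are min-homogeneous for the
   colours between their heads; [y] followed by these blocks is exactly
   [omega^(k+1)]-large and transitive.  This proves the theorem with [3n] in
   place of [36n]. *)

From mathcomp Require Import all_boot zify.
Set Implicit Arguments. Unset Strict Implicit. Unset Printing Implicit Defensive.

(** * Exact largeness *)

Lemma large0 Z : large [::] Z.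
Proof. by rewrite /large; elim: Z. Qed.

Lemma fund_rcons a e m :
  fund (rcons a e) m = a ++ (if e is n.+1 then omega_pow_mul n m else [::]).
Proof. by rewrite /fund rev_rcons; case: e => [|n]; rewrite revK ?cats0. Qed.

Lemma fund_cat a b m : b != [::] -> fund (a ++ b) m = a ++ fund b m.
Proof. by case/lastP: b => [//|b e] _; rewrite -rcons_cat !fund_rcons catA. Qed.

Fixpoint exactly_large (a : ord) (Y : seq nat) : bool :=
  if Y is y :: Y' then (a != [::]) && exactly_large (fund a y) Y' else a == [::].

Lemma exactly_large_succ n y Y :
  exactly_large [:: n.+1] (y :: Y) = exactly_large (nseq y n) Y.
Proof. by []. Qed.

Lemma exactly_large_large a Y : exactly_large a Y -> large a Y.
Proof. by rewrite /large; elim: Y a => [|y Y IH] a /=; [|case/andP=> _ /IH]. Qed.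

Lemma large_exactly_prefix a Y :
  large a Y -> exists U V, Y = U ++ V /\ exactly_large a U.
Proof.
rewrite /large; elim: Y a => [|y Y IH] a /=; first by exists [::], [::].
have [->|a0] := eqVneq a [::]; first by exists [::], (y :: Y).
by case/IH=> U [V [-> hU]]; exists (y :: U), V; rewrite /= a0.
Qed.

Lemma exactly_large_cat a b U V :
  exactly_large b U -> exactly_large a V -> exactly_large (a ++ b) (U ++ V).
Proof.
elim: U b => [|u U IH] b /=; first by move/eqP->; rewrite cats0.
case/andP=> b0 hU hV; rewrite fund_cat // IH // andbT.
by move: b0; rewrite -!size_eq0 size_cat; lia.
Qed.

Lemma exactly_large_cat_split a b W : b != [::] -> exactly_large (a ++ b) W ->
  exists U V, [/\ W = U ++ V, exactly_large b U & exactly_large a V].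
Proof.
elim: W b => [|w W IH] b b0 /=.
  by move: b0; rewrite -!size_eq0 size_cat; lia.
case/andP=> _; rewrite fund_cat //.
have [bw0|bw0] := eqVneq (fund b w) [::].
  by rewrite bw0 cats0 => hW; exists [:: w], W; rewrite /= b0 bw0.
case/(IH _ bw0)=> U [V [-> hU hV]].
by exists (w :: U), V; rewrite /= b0 hU.
Qed.

Lemma exactly_large_nseq_blocks n c W : exactly_large (nseq n c) W ->
  exists2 Ds, size Ds = n /\ W = flatten Ds & all (exactly_large [:: c]) Ds.
Proof.
elim: n W => [|n IH] W; first by case: W => // /eqP _; exists [::].
rewrite -{1}addn1 nseqD => /exactly_large_cat_split-/(_ isT) [D [W' [-> hD]]].
by case/IH=> Ds [<- ->] hDs; exists (D :: Ds); rewrite //= hD.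
Qed.

Lemma exactly_large_flatten c Ds : all (exactly_large [:: c]) Ds ->
  exactly_large (nseq (size Ds) c) (flatten Ds).
Proof.
elim: Ds => [|D Ds IH] // /andP[hD /IH hDs].
by rewrite [size _]/= -addn1 nseqD; apply: exactly_large_cat.
Qed.

Lemma exactly_large_nseq_prefix m n c W : m <= n ->
  exactly_large (nseq n c) W -> exists U V, W = U ++ V /\ exactly_large (nseq m c) U.
Proof.
case: m => [|m] le_mn; first by exists [::], W.
rewrite -(subnK le_mn) nseqD => /exactly_large_cat_split-/(_ isT) [U [V [-> hU _]]].
by exists U, V.
Qed.

(** * Comparing ordinals through their multiplicities *)

Definition mult (a : ord) (i : nat) : nat := count_mem i a.

Lemma mult_rcons a e i : mult (rcons a e) i = mult a i + (e == i).
Proof. by rewrite /mult -cats1 count_cat /= addn0. Qed.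

Lemma mult_cat a b i : mult (a ++ b) i = mult a i + mult b i.
Proof. by rewrite /mult count_cat. Qed.

Lemma mult_nseq n c i : mult (nseq n c) i = (c == i) * n.
Proof. by rewrite /mult count_nseq. Qed.

Lemma mult_sort a i : mult (sort geq a) i = mult a i.
Proof. by rewrite /mult count_sort. Qed.

Lemma mult_eq0 a : (forall i, mult a i = 0) -> a = [::].
Proof. by case: a => // e a /(_ e); rewrite /mult /= eqxx. Qed.

Lemma mult_below a e i : {in a, forall x, e <= x} -> i < e -> mult a i = 0.
Proof. by move=> le_ea lt_ie; apply/count_memPn/negP => /le_ea; lia. Qed.

(* [if e is n.+1 then (n == i) * z else 0], written arithmetically for [lia]. *)
Definition fund_mult (e z i : nat) : nat := (0 < e) * (e.-1 == i) * z.

Lemma mult_fund a e z i : mult (fund (rcons a e) z) i = mult a i + fund_mult e z i.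
Proof.
rewrite fund_rcons /fund_mult /mult; case: e => [|n] /=; first by rewrite cats0 addn0.
by rewrite count_cat count_nseq mul1n.
Qed.

Lemma cnf_pairwise a : cnf a = pairwise geq a.
Proof. by apply: sorted_pairwise => x y z /= le_yx le_zy; apply: leq_trans le_zy le_yx. Qed.

Lemma cnf_rcons a e : cnf (rcons a e) -> cnf a /\ {in a, forall x, e <= x}.
Proof. by rewrite !cnf_pairwise pairwise_rcons => /andP[/allP]. Qed.

Lemma cnf_nseq n c : cnf (nseq n c).
Proof. by elim: n => //= -[|n] //= ->; rewrite andbT. Qed.

Lemma cnf_sort a : cnf (sort geq a).
Proof. by apply: sort_sorted => x y; apply: leq_total. Qed.

Lemma cnf_fund a m : cnf a -> cnf (fund a m).
Proof.
case/lastP: a => [//|a e] /cnf_rcons[ha le_e]; rewrite fund_rcons /omega_pow_mul.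
case: e le_e => [|n] le_e; first by rewrite cats0.
move: ha; rewrite !cnf_pairwise pairwise_cat => ->; rewrite -cnf_pairwise cnf_nseq !andbT.
by apply/allrelP => x y /le_e lt_nx; rewrite mem_nseq => /andP[_ /eqP->]; apply: ltnW.
Qed.

(* A comparison, with slack [m], of multiplicity vectors of CNF ordinals that,
   unlike the ordinal order, is preserved by fundamental sequences at any
   argument [z > m] (with new slack [z]). *)
Definition dominated (m : nat) (f g : nat -> nat) : Prop :=
  (forall i, f i = g i) \/
  exists j, [/\ forall i, j < i -> f i = g i, f j < g j &
                forall i, i < j -> f i <= g i + m].

Lemma dominated_ext m f f' g g' : f =1 f' -> g =1 g' ->
  dominated m f g -> dominated m f' g'.
Proof.
move=> ef eg [e|[j [above lt_j below]]]; first by left=> i; rewrite -ef -eg.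
right; exists j; split=> [i lt_ji||i lt_ij]; rewrite -ef -eg //; first exact: above.
exact: below.
Qed.

Lemma dominated_fund m z (f g : nat -> nat) s t : m < z ->
  (forall i, i < s -> g i = 0) -> (forall i, i < t -> f i = 0) ->
  dominated m (fun i => f i + (t == i)) (fun i => g i + (s == i)) ->
  dominated z (fun i => f i + fund_mult t z i) (fun i => g i + fund_mult s z i).
Proof.
rewrite /fund_mult => lt_mz g0 f0 [e|[j [above lt_j below]]].
  have est : s = t.
    case: (ltngtP s t) => // lt_st; first by have := e s; have := f0 s lt_st; lia.
    by have := e t; have := g0 t lt_st; lia.
  by subst t; left => i; have := e i; lia.
have le_sj : s <= j by rewrite leqNgt; apply/negP => lt_js; have := g0 j lt_js; lia.
right; case: (ltnP j t) => [lt_jt|le_tj].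
  exists t; split=> [i lt_ti||i lt_it].
  - by have := above i; lia.
  - by have := above t; lia.
  - by have := above i; have := f0 i; lia.
case: (ltnP s j) => [lt_sj|le_js].
  exists j; split=> [i lt_ji||i lt_ij]; last by have := below i; have := f0 i; lia.
  - by have := above i; lia.
  - by lia.
have {le_sj le_js} esj : s = j by apply/eqP; rewrite eqn_leq le_sj.
subst s; case: (eqVneq t j) => [etj|ne_tj].
  subst t; exists j; split=> [i lt_ji||i lt_ij]; last by have := g0 i; have := f0 i; lia.
  - by have := above i; lia.
  - by lia.
case: (ltnP (f j) (g j)) => [lt_fg|le_gf].
  exists j; split=> [i lt_ji||i lt_ij].
  - by have := above i; lia.
  - by lia.
  - by have := below i; have := g0 i; have := f0 i; lia.
exists j.-1; split=> [i lt_ji||i lt_ij].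
- by case: (ltngtP i j) => [||->]; have := above i; lia.
- by have := below j.-1; have := g0 j.-1; lia.
- by have := below i; have := g0 i; have := f0 i; lia.
Qed.

Lemma large_dominated Z a b m : pairwise ltn Z -> {in Z, forall z, m < z} ->
  cnf a -> cnf b -> dominated m (mult b) (mult a) -> large a Z -> large b Z.
Proof.
elim: Z a b m => [|z Z IH] a b m ltZ gtZ ha hb dom_ba.
  rewrite /large /= => /eqP a0; subst a; apply/eqP/mult_eq0.
  by case: dom_ba => [e i|[j [_ lt_j _]]]; [rewrite e | move: lt_j; rewrite /mult].
change (large (fund a z) Z -> large (fund b z) Z).
case/lastP: b hb dom_ba => [|b t] hb dom_ba; first by move=> _; exact: large0.
case/lastP: a ha dom_ba => [|a s] ha dom_ba.
  case: dom_ba => [/(_ t)|[j [_ lt_j _]]]; last by move: lt_j; rewrite /mult.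
  by rewrite mult_rcons /mult /= eqxx; lia.
move: ltZ; rewrite pairwise_cons => /andP[/allP lt_zZ ltZ].
apply: (IH _ _ z ltZ lt_zZ); [exact: cnf_fund | exact: cnf_fund |].
have [_ le_sa] := cnf_rcons ha; have [_ le_tb] := cnf_rcons hb.
apply: dominated_ext (fsym (mult_fund b t z)) (fsym (mult_fund a s z)) _.
apply: dominated_fund => [|i|i|]; first by apply: gtZ; rewrite mem_head.
- exact: mult_below.
- exact: mult_below.
by apply: dominated_ext dom_ba => i; rewrite mult_rcons.
Qed.

Lemma large_omega_pow_le i j Z : j <= i -> pairwise ltn Z -> {in Z, forall z, 1 < z} ->
  large (omega_pow i) Z -> large (omega_pow j) Z.
Proof.
rewrite leq_eqVlt => /orP[/eqP->//|lt_ji] ltZ gtZ.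
apply: large_dominated ltZ gtZ _ _ _ => //; right; exists i.
rewrite /mult /= !eqxx; split=> [k lt_ik||k lt_ki]; rewrite //=; lia.
Qed.

(** * Partition and pigeonhole principles *)

Lemma dominated_fund_sum m (f g h : nat -> nat) a b s :
  (forall i, i < a -> f i = 0) -> (forall i, i < b -> g i = 0) ->
  s <= a -> s <= b -> (a <= s \/ b <= s) ->
  (forall i, h i + (s == i) = f i + (a == i) + (g i + (b == i))) ->
  dominated m.+1 (fun i => f i + fund_mult a m i + (g i + (b == i)))
                 (fun i => h i + fund_mult s m i).
Proof.
rewrite /fund_mult => f0 g0 le_sa le_sb ge_s e_h.
case: (leqP a b) => [le_ab|lt_ba].
  have esa : s = a by lia.
  by subst s; left => i; have := e_h i; lia.
have esb : s = b by lia.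
subst s; right; exists a; split=> [i lt_ai||i lt_ia].
- by have := e_h i; lia.
- by have := e_h a; lia.
- by have := e_h i; have := f0 i; lia.
Qed.

(* For [cnf] lists, [mult c = mult a + mult b] says that [c] is the natural
   (Hessenberg) sum of [a] and [b], which is [sort geq (a ++ b)]. *)
Lemma large_fund_sum x X a b c : pairwise [rel y z | y.+1 < z] (x :: X) ->
  cnf a -> cnf b -> cnf c -> a != [::] -> b != [::] ->
  (forall i, mult c i = mult a i + mult b i) ->
  large c (x :: X) -> large (sort geq (fund a x ++ b)) X.
Proof.
case/lastP: a => [//|a e]; case/lastP: b => [//|b d]; case/lastP: c => [|c s].
  by move=> _ _ _ _ _ _ /(_ d); rewrite !mult_rcons /mult /= eqxx; lia.
rewrite pairwise_cons => /andP[/allP gt_xX gapX] ha hb hc _ _ e_mult.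
have [_ le_ea] := cnf_rcons ha; have [_ le_db] := cnf_rcons hb.
have [_ le_sc] := cnf_rcons hc.
have e_c i : mult c i + (s == i) = mult a i + (e == i) + (mult b i + (d == i)).
  by have := e_mult i; rewrite !mult_rcons.
have ltX : pairwise ltn X by apply: sub_pairwise gapX => y z /=; lia.
apply: (large_dominated ltX (m := x.+1)); first by move=> y /gt_xX /=; lia.
- exact: cnf_fund.
- exact: cnf_sort.
apply: (@dominated_ext _ (fun i => mult a i + fund_mult e x i + (mult b i + (d == i))) _
                        (fun i => mult c i + fund_mult s x i)).
- by move=> i; rewrite mult_sort mult_cat mult_fund mult_rcons.
- by move=> i; rewrite mult_fund.
apply: (@dominated_fund_sum x (mult a) (mult b) (mult c) e d s _ _ _ _ _ e_c) => [i|i|||].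
- exact: mult_below.
- exact: mult_below.
- by rewrite leqNgt; apply/negP => lt_es; have := e_c e; have := mult_below le_sc lt_es; lia.
- by rewrite leqNgt; apply/negP => lt_ds; have := e_c d; have := mult_below le_sc lt_ds; lia.
case: (leqP e s) => [|lt_se]; [by left|]; case: (leqP d s) => [|lt_sd]; [by right|].
by have := e_c s; have := mult_below le_ea lt_se; have := mult_below le_db lt_sd; lia.
Qed.

Lemma large_partition X (p : pred nat) a b c : pairwise [rel y z | y.+1 < z] X ->
  cnf a -> cnf b -> cnf c -> (forall i, mult c i = mult a i + mult b i) ->
  large c X -> large a [seq x <- X | p x] \/ large b [seq x <- X | ~~ p x].
Proof.
elim: X a b c => [|x X IH] a b c gapX ha hb hc e_c.
  rewrite /large /= => /eqP c0; subst c; left; apply/eqP/mult_eq0 => i.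
  by have := e_c i; rewrite /mult /=; lia.
have [->|a0] := eqVneq a [::]; first by left; apply: large0.
have [->|b0] := eqVneq b [::]; first by right; apply: large0.
have gapX' : pairwise [rel y z | y.+1 < z] X by case/andP: gapX.
move=> hL; rewrite /=; case: (p x) => /=.
  apply: (IH _ b (sort geq (fund a x ++ b)) gapX') => //.
  - exact: cnf_fund.
  - exact: cnf_sort.
  - by move=> i; rewrite mult_sort mult_cat.
  exact: large_fund_sum gapX ha hb hc a0 b0 e_c hL.
apply: (IH a _ (sort geq (fund b x ++ a)) gapX') => //.
- exact: cnf_fund.
- exact: cnf_sort.
- by move=> i; rewrite mult_sort mult_cat addnC.
by apply: large_fund_sum gapX hb ha hc b0 a0 _ hL => i; rewrite addnC.
Qed.

Lemma large_pigeonhole L (col : nat -> seq bool) c X :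
  pairwise [rel y z | y.+1 < z] X -> {in X, forall x, size (col x) = L} ->
  large (nseq (2 ^ L) c) X -> exists v, large [:: c] [seq x <- X | col x == v].
Proof.
elim: L col X => [|L IH] col X gapX sizeX hL.
  exists [::]; rewrite (@eq_in_filter _ _ predT) ?filter_predT //.
  by move=> x /sizeX /size0nil ->.
have [b hb] : exists b, large (nseq (2 ^ L) c) [seq x <- X | head false (col x) == b].
  have e_c i : mult (nseq (2 ^ L.+1) c) i =
               mult (nseq (2 ^ L) c) i + mult (nseq (2 ^ L) c) i.
    by rewrite !mult_nseq expnS mul2n -addnn mulnDr.
  have [h|h] := large_partition (fun x => head false (col x)) gapX
                  (cnf_nseq _ _) (cnf_nseq _ _) (cnf_nseq _ _) e_c hL.
    by exists true; under eq_filter do rewrite eqb_id.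
  by exists false; under eq_filter do rewrite eqbF_neg.
have [|v hv] := IH (fun x => behead (col x)) _ (pairwise_filter _ gapX) _ hb.
  by move=> x; rewrite mem_filter => /andP[_ /sizeX]; rewrite size_behead => ->.
exists (b :: v); congr (large _ _): hv; rewrite -filter_predI.
by apply: eq_in_filter => x /sizeX /=; case: (col x) => //= y t _; rewrite eqseq_cons andbC.
Qed.

(** * Exp-sparse sets and min-homogeneous sequences *)

Lemma fin_set_cat_lt A B a b : fin_set (A ++ B) -> a \in A -> b \in B -> a < b.
Proof.
rewrite /fin_set sorted_pairwise ?pairwise_cat; last exact: ltn_trans.
by case/and3P=> /allrelP lt_AB _ _; apply: lt_AB.
Qed.

Lemma exp_sparse_sub Y X : {subset Y <= X} -> exp_sparse X -> exp_sparse Y.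
Proof.
by move=> sYX [ge3 sp]; split=> [x /sYX|x y /sYX hx /sYX hy]; [apply: ge3|apply: sp].
Qed.

Lemma exp_sparse_cat_lt A B a b : fin_set (A ++ B) -> exp_sparse (A ++ B) ->
  a \in A -> b \in B -> 4 ^ a < b.
Proof.
move=> finAB [_ sp] hA hB; apply: sp; rewrite ?mem_cat ?hA ?hB ?orbT //.
exact: fin_set_cat_lt finAB hA hB.
Qed.

Lemma exp_sparse_gap X : fin_set X -> exp_sparse X -> pairwise [rel y z | y.+1 < z] X.
Proof.
rewrite /fin_set sorted_pairwise => [finX [_ sp]|]; last exact: ltn_trans.
apply: (sub_in_pairwise (P := mem X) _ (allss X) finX) => x y hx hy lt_xy /=.
by have := sp x y hx hy lt_xy; have := ltn_expl x (isT : 1 < 4); lia.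
Qed.

Lemma exp_sparse_size_bound pre d W n : fin_set (pre ++ d :: W) ->
  exp_sparse (pre ++ d :: W) -> (exists2 p, p \in pre & n <= p) ->
  2 ^ (size pre + n) <= d.
Proof.
move=> finX spX [p p_pre le_np]; pose q := \max_(x <- pre) x.
have le_q x : x \in pre -> x <= q by move=> hx; apply: leq_bigmax_seq.
have lt_qd : 4 ^ q < d.
  rewrite /q big_seq; elim/big_ind: _ => [|m1 m2 h1 h2|x hx].
  - by have [ge3 _] := spX; have := ge3 d; rewrite mem_cat mem_head orbT => /(_ isT); lia.
  - by case: (leqP m1 m2).
  - by apply: exp_sparse_cat_lt finX spX hx _; rewrite mem_head.
have size_q : size pre <= q.
  have uniq_pre : uniq pre.
    exact: sorted_uniq ltn_trans ltnn _ (subseq_sorted ltn_trans (prefix_subseq _ _) finX).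
  rewrite -(size_iota 1 q); apply: uniq_leq_size uniq_pre _ => x hx.
  have [ge3 _] := spX; have := ge3 x; rewrite mem_cat hx mem_iota => /(_ isT).
  by have := le_q x hx; lia.
apply: leq_trans (ltnW lt_qd); rewrite -(expnM 2 2) leq_exp2l //.
by have := le_q p p_pre; lia.
Qed.

Lemma subseq_flatten (T : eqType) (S R : seq (seq T)) :
  subseq S R -> subseq (flatten S) (flatten R).
Proof.
elim: R S => [|B R IH] [|A S] //=; rewrite ?sub0seq //.
have [->|_] := eqVneq A B; first by move/IH; apply: cat_subseq.
by move/IH/subseq_trans; apply; apply: suffix_subseq.
Qed.

Lemma transitive_on1 P x : transitive_on P [:: x].
Proof. by move=> a b c; rewrite !inE => /eqP-> /eqP-> _; rewrite ltnn. Qed.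

Lemma transitive_on_cat P A B w : transitive_on P A -> transitive_on P B ->
  (forall a b, a \in A -> b \in B -> a < b /\ P a b = w) -> transitive_on P (A ++ B).
Proof.
move=> trA trB AB x y z; rewrite !mem_cat.
case/orP=> hx; case/orP=> hy; case/orP=> hz lt_xy lt_yz; try by [apply: trA|apply: trB].
- by have [_ ->] := AB _ _ hx hz; have [_ ->] := AB _ _ hy hz => ->.
- by have [lt_zy _] := AB _ _ hz hy; lia.
- by have [_ ->] := AB _ _ hx hy; have [_ ->] := AB _ _ hx hz.
- by have [lt_yx _] := AB _ _ hy hx; lia.
- by have [lt_yx _] := AB _ _ hy hx; lia.
- by have [lt_zy _] := AB _ _ hz hy; lia.
Qed.

Definition uniform_pair (P : nat -> nat -> bool) (A B : seq nat) : bool :=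
  all (fun a => all (fun b => (a < b) && (P a b == P (head 0 A) (head 0 B))) B) A.

Fixpoint min_homogeneous (T : eqType) (r : T -> T -> bool) (s : seq T) : Prop :=
  if s is a :: s' then {in s', forall b, r a b = r a (head a s')} /\ min_homogeneous r s'
  else True.

Lemma transitive_on_flatten P S : pairwise (uniform_pair P) S ->
  min_homogeneous (fun A B => P (head 0 A) (head 0 B)) S ->
  {in S, forall A, transitive_on P A} -> transitive_on P (flatten S).
Proof.
elim: S => [|A S IH] /=; first by move=> _ _ _ x.
case/andP=> /allP unifA unifS [homA homS] trS.
apply: (@transitive_on_cat P A _ (P (head 0 A) (head 0 (head A S)))).
- by apply: trS; rewrite mem_head.
- by apply: IH => // B hB; apply: trS; rewrite inE hB orbT.
move=> a b ha /flattenP[B hB hb].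
have /allP/(_ _ ha)/allP/(_ _ hb)/andP[-> /eqP->] := unifA _ hB.
by rewrite homA.
Qed.

Lemma min_homogeneous_subseq (T : eqType) (r : T -> T -> bool) t h R :
  2 ^ t <= (size R).+1 -> exists S, [/\ subseq S R, size S = t & min_homogeneous r (h :: S)].
Proof.
elim: t h R => [|t IH] h R le_tR; first by exists [::]; rewrite sub0seq.
have [R' [subR' [b hb] le_tR']] : exists R', [/\ subseq R' R,
    exists b, {in R', forall x, r h x = b} & 2 ^ t <= size R'].
  pose R1 := filter (r h) R; pose R0 := filter (predC (r h)) R.
  have sizeR : size R1 + size R0 = size R by rewrite !size_filter count_predC.
  case: (leqP (2 ^ t) (size R1)) => [le_t1|lt_t1].
    exists R1; split=> //; first exact: filter_subseq.
    by exists true => x; rewrite mem_filter => /andP[].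
  exists R0; split; first exact: filter_subseq.
    by exists false => x; rewrite mem_filter => /andP[/negbTE].
  by move: le_tR; rewrite expnS; lia.
case: R' subR' hb le_tR' => [|h' R'] subR' hb le_tR'.
  by have := expn_gt0 2 t; move: le_tR' => /=; lia.
have [S [subS sizeS homS]] := IH h' R' le_tR'.
exists (h' :: S); split.
- by apply: subseq_trans subR'; rewrite /= eqxx.
- by rewrite /= sizeS.
split=> // x hx; rewrite !hb ?mem_head //.
by move: hx; rewrite !inE => /predU1P[->|/(mem_subseq subS)->]; rewrite ?eqxx ?orbT.
Qed.

(** * Transitive subsets *)

Lemma large_omega_pow_succ2_split j Z :
  {in Z, forall z, 0 < z} -> large [:: j.+2] Z ->
  exists y e Ds R,
    [/\ Z = [:: y, e & flatten Ds] ++ R, size Ds = e & all (exactly_large [:: j]) Ds].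
Proof.
move=> posZ /large_exactly_prefix[[|y W] [V [eZ]]] //.
rewrite exactly_large_succ; have: 0 < y by apply: posZ; rewrite eZ mem_head.
case: y eZ => [//|y] eZ _; rewrite -addn1 nseqD.
case/exactly_large_cat_split=> // -[|e W1] [W2 [eW hE _]] //.
move: hE; rewrite exactly_large_succ => /exactly_large_nseq_blocks[Ds [sizeDs eW1] hDs].
by exists y.+1, e, Ds, (W2 ++ V); rewrite eZ eW eW1 /= -!catA.
Qed.

Section HomogeneousBlocks.

Variables (P : nat -> nat -> bool) (k : nat).

Hypothesis transitive_subseq_k : forall Q, fin_set Q -> exp_sparse Q ->
  large [:: 3 * k] Q -> exists C, [/\ subseq C Q, exactly_large [:: k] C & transitive_on P C].

Lemma homogeneous_block L (col : nat -> seq bool) D :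
  fin_set D -> exp_sparse D -> exactly_large [:: (3 * k).+1] D ->
  {in D, forall x, size (col x) = L} -> 2 ^ L <= head 0 D ->
  exists C, [/\ subseq C D, exactly_large [:: k] C, transitive_on P C &
                {in C, forall c, col c = col (head 0 C)}].
Proof.
case: D => [//|d W] finD spD; rewrite exactly_large_succ => hW sizeD le_Ld.
have [U [V [eW hU]]] := exactly_large_nseq_prefix le_Ld hW.
have subU : subseq U (d :: W).
  by rewrite eW; apply: subseq_trans (prefix_subseq U V) (subseq_cons _ _).
have finU : fin_set U := subseq_sorted ltn_trans subU finD.
have spU : exp_sparse U := exp_sparse_sub (mem_subseq subU) spD.
have [|v hv] :=
  large_pigeonhole (col := col) (exp_sparse_gap finU spU) _ (exactly_large_large hU).
  by move=> x /(mem_subseq subU) /sizeD.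
have subQ : subseq [seq x <- U | col x == v] U := filter_subseq _ _.
have [C [subC hC trC]] := transitive_subseq_k (subseq_sorted ltn_trans subQ finU)
  (exp_sparse_sub (mem_subseq subQ) spU) hv.
have colC c : c \in C -> col c = v.
  by move/(mem_subseq subC); rewrite mem_filter => /andP[/eqP].
exists C; split=> // [|c hc]; first by apply: subseq_trans subC (subseq_trans subQ subU).
rewrite (colC c hc) colC //.
by case: (C) hc => // c' C' _; rewrite mem_head.
Qed.

(* The blocks are chosen from right to left, so that the block chosen inside
   [D] can be made homogeneous towards the heads of the later ones. *)
Lemma homogeneous_blocks Ds pre :
  fin_set (pre ++ flatten Ds) -> exp_sparse (pre ++ flatten Ds) ->
  all (exactly_large [:: (3 * k).+1]) Ds -> (exists2 p, p \in pre & size Ds <= p) ->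
  exists Cs, [/\ size Cs = size Ds, subseq (flatten Cs) (flatten Ds),
    {in Cs, forall C, exactly_large [:: k] C /\ transitive_on P C},
    pairwise (uniform_pair P) Cs &
    {in pre, forall f, {in Cs, forall C, {in C, forall c, P f c = P f (head 0 C)}}}].
Proof.
elim: Ds pre => [|D Ds IH] pre finX spX; first by exists [::].
case/andP=> hD hDs [p p_pre le_p].
have finX' : fin_set ((pre ++ D) ++ flatten Ds) by rewrite -catA.
have spX' : exp_sparse ((pre ++ D) ++ flatten Ds) by rewrite -catA.
have [|Cs [sizeCs subCs goodCs unifCs homCs]] := IH (pre ++ D) finX' spX' hDs.
  by exists p; rewrite ?mem_cat ?p_pre //; apply: ltnW.
case: D hD finX spX finX' spX' homCs le_p => [//|d W] hD finX spX finX' spX' homCs le_p.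
pose col a := [seq P f a | f <- pre] ++ [seq P a (head 0 C) | C <- Cs].
have le_Ld : 2 ^ (size pre + size Ds) <= d.
  by apply: exp_sparse_size_bound finX spX _; exists p => //; apply: ltnW.
have subD : subseq (d :: W) (pre ++ flatten ((d :: W) :: Ds)).
  by apply: subseq_trans (prefix_subseq _ _) (suffix_subseq _ _).
have [|C [subC hC trC colC]] := homogeneous_block (L := size pre + size Ds) (col := col)
  (subseq_sorted ltn_trans subD finX) (exp_sparse_sub (mem_subseq subD) spX) hD _ le_Ld.
  by move=> x _; rewrite size_cat !size_map sizeCs.
have homC a : a \in C -> {in pre, forall f, P f a = P f (head 0 C)} /\
                        {in Cs, forall C', P a (head 0 C') = P (head 0 C) (head 0 C')}.
  by move/colC/eqP; rewrite eqseq_cat ?size_map // => /andP[/eqP/eq_in_map ? /eqP/eq_in_map].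
have ltDDs a c : a \in d :: W -> c \in flatten Ds -> a < c.
  by move=> ha hc; apply: fin_set_cat_lt finX' _ hc; rewrite mem_cat ha orbT.
exists (C :: Cs); split.
- by rewrite /= sizeCs.
- exact: cat_subseq subC subCs.
- by move=> C'; rewrite inE => /predU1P[->|/goodCs].
- rewrite /= unifCs andbT; apply/allP => C' hC'; apply/allP => a ha; apply/allP => c hc.
  have aD : a \in d :: W := mem_subseq subC ha.
  rewrite ltDDs //; last by apply: (mem_subseq subCs); apply/flattenP; exists C'.
  have aX : a \in pre ++ d :: W by rewrite mem_cat aD orbT.
  by rewrite (homCs a aX C' hC' c hc); have [_ ->] := homC a ha; rewrite ?eqxx.
move=> f f_pre C'; rewrite inE => /predU1P[-> c /homC[-> //]|hC' c hc] //.
by apply: homCs; rewrite ?mem_cat ?f_pre.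
Qed.

End HomogeneousBlocks.

Lemma transitive_subseq P k Z : fin_set Z -> exp_sparse Z -> large [:: 3 * k] Z ->
  exists Y, [/\ subseq Y Z, exactly_large [:: k] Y & transitive_on P Y].
Proof.
elim: k Z => [|k IHk] Z finZ spZ.
  case: Z finZ spZ => [//|z Z] _ _ _.
  by exists [:: z]; split; [rewrite sub1seq mem_head | | exact: transitive_on1].
have posZ : {in Z, forall z, 0 < z} by case: spZ => ge3 _ z /ge3; lia.
rewrite mulnS !addSn add0n.
case/(large_omega_pow_succ2_split posZ)=> [y [e [Ds [R [eZ sizeDs hDs]]]]].
have subX : subseq ([:: y; e] ++ flatten Ds) Z by rewrite eZ; apply: prefix_subseq.
have finX : fin_set ([:: y; e] ++ flatten Ds) := subseq_sorted ltn_trans subX finZ.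
have spX : exp_sparse ([:: y; e] ++ flatten Ds) := exp_sparse_sub (mem_subseq subX) spZ.
have [|Cs [sizeCs subCs goodCs unifCs homCs]] := homogeneous_blocks IHk finX spX hDs.
  by exists e; rewrite ?inE ?eqxx ?orbT ?sizeDs.
have le_yCs : 2 ^ y <= (size Cs).+1.
  have lt_ye : 4 ^ y < e :=
    exp_sparse_cat_lt (A := [:: y]) finX spX (mem_head _ _) (mem_head _ _).
  have le_2y4y : 2 ^ y <= 4 ^ y by rewrite -(expnM 2 2) leq_exp2l //; lia.
  by rewrite sizeCs sizeDs; lia.
have [S [subS sizeS homS]] :=
  min_homogeneous_subseq (fun A B => P (head 0 A) (head 0 B)) [:: y] le_yCs.
have subSDs : subseq (flatten S) (flatten Ds) := subseq_trans (subseq_flatten subS) subCs.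
exists (y :: flatten S); split.
- rewrite eZ; apply: (cat_subseq (subseq_refl [:: y])).
  exact: subseq_trans subSDs (subseq_trans (prefix_subseq _ R) (subseq_cons _ e)).
- rewrite exactly_large_succ -sizeS; apply: exactly_large_flatten.
  by apply/allP => C /(mem_subseq subS) /goodCs[].
change (transitive_on P (flatten ([:: y] :: S))); apply: transitive_on_flatten => //.
  apply: (subseq_pairwise (ys := [:: y] :: Cs)); first by rewrite /= eqxx.
  rewrite /= unifCs andbT; apply/allP => C hC.
  rewrite /uniform_pair /= andbT; apply/allP => c hc.
  have cDs : c \in flatten Ds by apply: (mem_subseq subCs); apply/flattenP; exists C.
  rewrite (homCs y _ C hC c hc) ?mem_head // eqxx andbT.
  by apply: (fin_set_cat_lt (A := [:: y]) finX (mem_head _ _)); rewrite inE cDs orbT.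
by move=> B; rewrite inE => /predU1P[->|/(mem_subseq subS)/goodCs[]//]; apply: transitive_on1.
Qed.

Theorem theorem2p10 (n : nat) (X : seq nat) :
  fin_set X -> large (omega_pow (36 * n)) X -> exp_sparse X ->
  forall P : nat -> nat -> bool,
  exists Y : seq nat,
    [/\ fin_set Y, {subset Y <= X}, large (omega_pow n) Y & transitive_on P Y].
Proof.
move=> finX hL spX P.
have ltX : pairwise ltn X by rewrite -sorted_pairwise //; exact: ltn_trans.
have gt1X : {in X, forall x, 1 < x} by case: spX => ge3 _ x /ge3; lia.
have hL3 : large (omega_pow (3 * n)) X.
  by apply: large_omega_pow_le ltX gt1X hL; lia.
have [Y [subY hY trY]] := transitive_subseq P finX spX hL3.
exists Y; split=> //; last exact: exactly_large_large.
- exact: (subseq_sorted ltn_trans subY finX).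
- exact: mem_subseq subY.
Qed.
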